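(* Consider the TEP model described in the context. Let $\rho^1,\dots,\rho^m$, $m>1$, be directed paths of buses, each consisting of consecutive bus pairs that form established corridors, such that all paths have the same starting bus and the same ending bus, and the intermediate buses of distinct paths are disjoint: writing $\rho^r=(i^r_0,i^r_1),\dots,(i^r_{L_r-1},i^r_{L_r})$, we have $i^r_0=i^{r'}_0$, $i^r_{L_r}=i^{r'}_{L_{r'}}$ and $\{i^r_t\}_{t=1}^{L_r-1}\cap\{i^{r'}_t\}_{t=1}^{L_{r'}-1}=\emptyset$ for $r\ne r'$. For each path $\rho^r$ and each $t$, fix an existing-line index $k^r_t\in\{1,\dots,\omega^0_{i^r_{t-1}i^r_t}\}$, and define $$\pi^r_0=\sum_{t=1}^{L_r}x_{i^r_{t-1}i^r_t,k^r_t}\,\overline P^0_{i^r_{t-1}i^r_t,k^r_t},\qquad \pi^r_t=\operatorname{sgn}(i^r_{t-1}-i^r_t)\,x_{i^r_{t-1}i^r_t,k^r_t}\ (t=1,\dots,L_r).$$ Then for every $r=1,\dots,m$ the two-sided inequality $$-\min\{\pi^n_0\}_{n=1}^m\;\le\;\sum_{t=1}^{L_r}\pi^r_t\,\tilde P^0_{i^r_{t-1}i^r_t,k^r_t}\;\le\;\min\{\pi^n_0\}_{n=1}^m$$ is valid for TEP (satisfied by every feasible solution), for any such choices of line indices.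
   Context: TEP model (DC-power-flow transmission expansion planning, disjunctive MILP). $B$ is a finite set of buses (integers); $\Omega$ is a set of corridors $(i,j)$ of buses, stored with $i<j$. Corridor $(i,j)$ has $\omega^0_{ij}\ge 0$ existing lines and $\bar\omega_{ij}\ge0$ candidate lines. Corridor $(i,j)$ is *established* if $\omega^0_{ij}>0$ and an *expansion corridor* if $\omega^0_{ij}=0$. Line $k$ of corridor $(i,j)$ has susceptance $b_{ij,k}$ and reactance $x_{ij,k}=-1/b_{ij,k}$; existing lines have capacity $\overline P^0_{ij,k}$, candidate lines capacity $\overline P_{ij,k}$. Further parameters: demands $d_n$, generation limits $\overline g_n$, angle limit $\overline\theta$, big-M constants $M_{ij}$, costs. Variables: binary $y_{ij,k}$, flows $P^0_{ij,k}$ (existing lines) and $P_{ij,k}$ (candidate lines), generation $g_n\ge0$, bus angles $\theta_n$ (free). Constraints: for each bus $n$, $\sum_{(n,i)\in\Omega}\big(\sum_k P^0_{ni,k}+\sum_k P_{ni,k}\big)-\sum_{(i,n)\in\Omega}\big(\sum_k P^0_{in,k}+\sum_k P_{in,k}\big)+g_n=d_n$; $-\overline P^0_{ij,k}\le P^0_{ij,k}\le \overline P^0_{ij,k}$; $-\overline P_{ij,k}y_{ij,k}\le P_{ij,k}\le\overline P_{ij,k}y_{ij,k}$; $x_{ij,k}P^0_{ij,k}-(\theta_i-\theta_j)=0$ for existing lines; $-M_{ij}(1-y_{ij,k})\le x_{ij,k}P_{ij,k}-(\theta_i-\theta_j)\le M_{ij}(1-y_{ij,k})$ for candidate lines; $g_n\le\overline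 g_n$; $-\overline\theta\le\theta_i-\theta_j\le\overline\theta$ for $(i,j)\in\Omega$; $y_{ij,k}\in\{0,1\}$. An inequality is *valid for TEP* if every feasible point of this model satisfies it. Notation along paths: for a bus pair traversed as $(i,j)$ with $i>j$ (stored corridor $(j,i)$), set $x_{ij,k}=x_{ji,k}$, $\overline P^0_{ij,k}=\overline P^0_{ji,k}$ and $P^0_{ij,k}=-P^0_{ji,k}$. $\operatorname{sgn}(a)=1$ if $a>0$, $-1$ if $a<0$. Define $\tilde P^0_{ij,k}=\operatorname{sgn}(j-i)\,P^0_{ij,k}$. *)

From HB Require Import structures.
From mathcomp Require Import all_boot all_order all_algebra.
Set Implicit Arguments. Unset Strict Implicit. Unset Printing Implicit Defensive.
Import Order.TTheory GRing.Theory Num.Theory.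
Local Open Scope ring_scope.

(* Data of a TEP instance.  Line indices k are 1-based:
   existing lines of corridor (i,j): k = 1..w0 i j,
   candidate lines of corridor (i,j): k = 1..wbar i j. *)
Record TEPdata (R : realFieldType) := {
  Buses : seq int;
  Omega : seq (int * int);            (* corridors (i,j), stored with i<j *)
  w0    : int -> int -> nat;
  wbar  : int -> int -> nat;
  susc  : int -> int -> nat -> R;
  P0max : int -> int -> nat -> R;
  Pmax  : int -> int -> nat -> R;
  dem   : int -> R;
  gmax  : int -> R;
  thmax : R;
  bigM  : int -> int -> R
}.

Definition reac (R : realFieldType) (T : TEPdata R) (i j : int) (k : nat) : R :=
  - (susc T i j k)^-1.

Record TEPsol (R : realFieldType) := {
  ybin : int -> int -> nat -> bool;
  Pex  : int -> int -> nat -> R;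
  Pcand : int -> int -> nat -> R;
  gen  : int -> R;
  th   : int -> R
}.

(* Standing well-formedness of the instance: B and Omega are sets, corridors are
   stored with i<j and join buses of B, and all lines have positive reactance
   (negative susceptance), the usual DC power-flow convention. *)
Definition wf_TEP (R : realFieldType) (T : TEPdata R) : Prop :=
  [/\ uniq (Buses T), uniq (Omega T),
      (forall c, c \in Omega T -> [/\ c.1 < c.2, c.1 \in Buses T & c.2 \in Buses T]) &
      (forall c k, c \in Omega T ->
         ((1 <= k <= w0 T c.1 c.2)%N \/ (1 <= k <= wbar T c.1 c.2)%N) ->
         susc T c.1 c.2 k < 0)].

Definition corrflow (R : realFieldType) (T : TEPdata R) (s : TEPsol R) (c : int * int) : R :=
  \sum_(1 <= k < (w0 T c.1 c.2).+1) Pex s c.1 c.2 k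
  + \sum_(1 <= k < (wbar T c.1 c.2).+1) Pcand s c.1 c.2 k.

Definition feasible (R : realFieldType) (T : TEPdata R) (s : TEPsol R) : Prop :=
  [/\
      (forall n, n \in Buses T ->
         \sum_(c <- Omega T | c.1 == n) corrflow T s c
         - \sum_(c <- Omega T | c.2 == n) corrflow T s c + gen s n = dem T n),
      (forall c k, c \in Omega T -> (1 <= k <= w0 T c.1 c.2)%N ->
         (- P0max T c.1 c.2 k <= Pex s c.1 c.2 k <= P0max T c.1 c.2 k) /\
         reac T c.1 c.2 k * Pex s c.1 c.2 k - (th s c.1 - th s c.2) = 0),
      (forall c k, c \in Omega T -> (1 <= k <= wbar T c.1 c.2)%N ->
         (- Pmax T c.1 c.2 k * (ybin s c.1 c.2 k)%:R <= Pcand s c.1 c.2 k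
            <= Pmax T c.1 c.2 k * (ybin s c.1 c.2 k)%:R) /\
         (- bigM T c.1 c.2 * (1 - (ybin s c.1 c.2 k)%:R)
            <= reac T c.1 c.2 k * Pcand s c.1 c.2 k - (th s c.1 - th s c.2)
            <= bigM T c.1 c.2 * (1 - (ybin s c.1 c.2 k)%:R))),
      (forall n, n \in Buses T -> 0 <= gen s n <= gmax T n) &
      (forall c, c \in Omega T -> - thmax T <= th s c.1 - th s c.2 <= thmax T)].

(* t-th bus i_t of the path p = [i_0; ...; i_L] *)
Definition node (p : seq int) (t : nat) : int := nth 0 p t.

Definition stored (i j : int) : int * int := if i < j then (i, j) else (j, i).

Definition xd (R : realFieldType) (T : TEPdata R) (i j : int) (k : nat) : R :=
  reac T (stored i j).1 (stored i j).2 k.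
Definition P0maxd (R : realFieldType) (T : TEPdata R) (i j : int) (k : nat) : R :=
  P0max T (stored i j).1 (stored i j).2 k.
(* P^0_{ij,k} = - P^0_{ji,k} when i > j *)
Definition P0d (R : realFieldType) (s : TEPsol R) (i j : int) (k : nat) : R :=
  if i < j then Pex s i j k else - Pex s j i k.
Definition sgnR (R : realFieldType) (a : int) : R := (sgz a)%:~R.
Definition P0tilde (R : realFieldType) (s : TEPsol R) (i j : int) (k : nat) : R :=
  sgnR R (j - i) * P0d s i j k.

Definition established (R : realFieldType) (T : TEPdata R) (i j : int) : Prop :=
  stored i j \in Omega T /\ (0 < w0 T (stored i j).1 (stored i j).2)%N.

Definition is_path (R : realFieldType) (T : TEPdata R) (p : seq int) : Prop :=
  (2 <= size p)%N /\
  forall t, (1 <= t < size p)%N -> established T (nth 0 p t.-1) (nth 0 p t).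

Definition pi0 (R : realFieldType) (T : TEPdata R) (p : seq int) (kp : nat -> nat) : R :=
  \sum_(1 <= t < size p)
     xd T (nth 0 p t.-1) (nth 0 p t) (kp t) * P0maxd T (nth 0 p t.-1) (nth 0 p t) (kp t).

Definition pit (R : realFieldType) (T : TEPdata R) (p : seq int) (kp : nat -> nat) (t : nat) : R :=
  sgnR R (nth 0 p t.-1 - nth 0 p t) * xd T (nth 0 p t.-1) (nth 0 p t) (kp t).

Definition pathsum (R : realFieldType) (T : TEPdata R) (s : TEPsol R) (p : seq int)
  (kp : nat -> nat) : R :=
  \sum_(1 <= t < size p) pit T p kp t * P0tilde s (nth 0 p t.-1) (nth 0 p t) (kp t).

From HB Require Import structures.
From mathcomp Require Import all_boot all_order all_algebra.
Set Implicit Arguments. Unset Strict Implicit. Unset Printing Implicit Defensive.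
Import Order.TTheory GRing.Theory Num.Theory.
Local Open Scope ring_scope.

(* By Ohm's law each term pi_t P~^0 of a path equals the angle difference
   theta_{i_t} - theta_{i_{t-1}}, so the path sum telescopes to
   theta_end - theta_start, which is the same for every path.  The capacity
   limits bound each angle difference by x P^0max, hence
   |theta_end - theta_start| <= pi^n_0 for every path n. *)

Lemma telescope_sum_nth (X : Type) (V : zmodType) (x0 : X) (f : X -> V) (p : seq X) :
  (0 < size p)%N ->
  \sum_(1 <= t < size p) (f (nth x0 p t) - f (nth x0 p t.-1))
    = f (last x0 p) - f (head x0 p).
Proof.
move=> p_gt0; rewrite big_add1 /= telescope_sumr // (last_nth x0) -nth0.
by case: p p_gt0.
Qed.

Lemma stored_neq (R : realFieldType) (T : TEPdata R) (a b : int) :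
  wf_TEP T -> stored a b \in Omega T -> a != b.
Proof.
case=> _ _ corr _ /corr[+ _ _]; rewrite /stored.
by case: (ltgtP a b) => [_|_|->]; rewrite ?ltxx.
Qed.

Lemma sgnR_mul_P0tilde (R : realFieldType) (s : TEPsol R) (a b : int) (kk : nat) :
  a != b -> sgnR R (a - b) * P0tilde s a b kk = - P0d s a b kk.
Proof.
rewrite -subr_eq0 /P0tilde /sgnR mulrA -rmorphM /= -[b - a]opprB sgzN.
by case: sgzP => // _ _; rewrite ?mulrNN mulN1r.
Qed.

Definition existing_lines (R : realFieldType) (T : TEPdata R) (p : seq int)
  (kp : nat -> nat) : Prop :=
  forall t, (1 <= t < size p)%N ->
    (1 <= kp t <= w0 T (stored (node p t.-1) (node p t)).1
                       (stored (node p t.-1) (node p t)).2)%N.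

Section FeasibleSolution.

Variables (R : realFieldType) (T : TEPdata R) (s : TEPsol R).
Hypotheses (wfT : wf_TEP T) (feas : feasible T s).

Lemma reac_existing_gt0 (c : int * int) (kk : nat) :
  c \in Omega T -> (1 <= kk <= w0 T c.1 c.2)%N -> 0 < reac T c.1 c.2 kk.
Proof.
case: wfT => _ _ _ susc_lt0 cO kk_ex.
by rewrite /reac oppr_gt0 invr_lt0 susc_lt0 //; left.
Qed.

Section Line.

Variables (a b : int) (kk : nat).
Hypotheses (abO : stored a b \in Omega T)
           (kk_ex : (1 <= kk <= w0 T (stored a b).1 (stored a b).2)%N).

Lemma ohm_oriented : xd T a b kk * P0d s a b kk = th s a - th s b.
Proof.
case: feas => _ ex_lines _ _ _; have [_ /eqP] := ex_lines _ _ abO kk_ex.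
have := stored_neq wfT abO; rewrite /xd /P0d /stored subr_eq0 => /lt_total.
by case: ltP => [_ _ /eqP ->| _ _ /eqP]; rewrite // mulrN => ->; rewrite opprB.
Qed.

Lemma P0d_capacity : `|P0d s a b kk| <= P0maxd T a b kk.
Proof.
case: feas => _ ex_lines _ _ _; have [cap _] := ex_lines _ _ abO kk_ex.
by move: cap; rewrite /P0maxd /P0d /stored -ler_norml; case: ifP; rewrite ?normrN.
Qed.

Lemma line_term_angle :
  sgnR R (a - b) * xd T a b kk * P0tilde s a b kk = th s b - th s a.
Proof.
rewrite mulrAC sgnR_mul_P0tilde ?(stored_neq wfT abO) //.
by rewrite mulNr mulrC ohm_oriented opprB.
Qed.

Lemma angle_diff_line_bound : `|th s b - th s a| <= xd T a b kk * P0maxd T a b kk.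
Proof.
have x_gt0 : 0 < xd T a b kk by exact: reac_existing_gt0.
rewrite distrC -ohm_oriented normrM gtr0_norm // ler_pM2l //.
exact: P0d_capacity.
Qed.

End Line.

Section Path.

Variables (p : seq int) (kp : nat -> nat).
Hypotheses (path_p : is_path T p) (kp_ex : existing_lines T p kp).

Let end_angle_diff := th s (last 0 p) - th s (head 0 p).

Lemma end_angle_diffE :
  end_angle_diff = \sum_(1 <= t < size p) (th s (nth 0 p t) - th s (nth 0 p t.-1)).
Proof. by rewrite telescope_sum_nth //; case: path_p => /ltnW. Qed.

Lemma pathsum_angle_diff : pathsum T s p kp = end_angle_diff.
Proof.
rewrite end_angle_diffE; apply: eq_big_nat => t t_p.
have [_ est] := path_p; have [tO _] := est t t_p.
exact: line_term_angle tO (kp_ex t_p).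
Qed.

Lemma angle_diff_le_pi0 : `|end_angle_diff| <= pi0 T p kp.
Proof.
rewrite end_angle_diffE; apply: le_trans (ler_norm_sum _ _ _) _.
rewrite /pi0 big_nat_cond [leRHS]big_nat_cond; apply: ler_sum => t.
rewrite andbT => t_p; have [_ est] := path_p; have [tO _] := est t t_p.
exact: angle_diff_line_bound tO (kp_ex t_p).
Qed.

End Path.

End FeasibleSolution.

Theorem lemma2 (R : realFieldType) (T : TEPdata R) (m : nat)
  (rho : 'I_m -> seq int) (k : 'I_m -> nat -> nat) :
  wf_TEP T ->
  (1 < m)%N ->
  (forall r, is_path T (rho r)) ->
  (forall r r', head 0%R (rho r) = head 0%R (rho r')) ->
  (forall r r', last 0%R (rho r) = last 0%R (rho r')) ->
  (forall r r', r != r' -> forall t t',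
      (1 <= t < (size (rho r)).-1)%N -> (1 <= t' < (size (rho r')).-1)%N ->
      node (rho r) t != node (rho r') t') ->
  (forall r t, (1 <= t < size (rho r))%N ->
      (1 <= k r t <= w0 T (stored (node (rho r) t.-1) (node (rho r) t)).1
                          (stored (node (rho r) t.-1) (node (rho r) t)).2)%N) ->
  forall s : TEPsol R, feasible T s ->
  forall r : 'I_m,
    - (\big[Num.min/pi0 T (rho r) (k r)]_(n < m) pi0 T (rho n) (k n))
      <= pathsum T s (rho r) (k r)
      <= \big[Num.min/pi0 T (rho r) (k r)]_(n < m) pi0 T (rho n) (k n).
Proof.
move=> wfT _ paths same_head same_last _ lines s feas r.
rewrite (pathsum_angle_diff wfT feas (paths r) (lines r)) -ler_norml.
apply: le_bigmin => [|n _]; first exact: angle_diff_le_pi0 (lines r).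
by rewrite (same_head r n) (same_last r n); exact: angle_diff_le_pi0 (lines n).
Qed.
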